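(* Let $\mathbb{V}$ be a BIT speciale variety with signature $\mathcal{F}$, BIT speciale terms $0$, $\alpha_1,\dots,\alpha_n$, $\theta$ (as in the context). In every term below, the variables $y$ (with or without indices) are the ideal variables and the variables $x$ (with or without indices) are the parameters; all listed terms are ideal terms in their $y$-variables. For an operation symbol $\tau$ of arity $k$ and $1\le i\le n$, write $$T_{\tau,i}:=\alpha_i\big(\tau(\theta(y_{11},\dots,y_{1n},x_1),\theta(y_{21},\dots,y_{2n},x_2),\dots,\theta(y_{k1},\dots,y_{kn},x_k)),\ \tau(x_1,\dots,x_k)\big),$$ and, for $1\le j\le k$, $$S_{\tau,i,j}:=\alpha_i\big(\tau(x_1,\dots,x_{j-1},\theta(y_1,\dots,y_n,x_j),x_{j+1},\dots,x_k),\ \tau(x_1,\dots,x_k)\big),$$ and let $R_i:=\alpha_i(\theta(y_1,\dots,y_n,x),\theta(y_{n+1},\dots,y_{2n},x))$. Then each of the following sets of terms determines ideals in $\mathbb{V}$: (i) the terms $\theta(y_1,\dots,y_n,y_{n+1})$ and $\alpha_i(y_1,y_2)$ ($1\le i\le n$), together with $T_{\tau,i}$ for all $\tau\in\mathcal{F}\cup\{\theta\}$ and all $1\le i\le n$; (ii) the terms $0$, $\theta(y_1,\dots,y_n,y_{n+1})$ and $\alpha_i(y,0)$ ($1\le i\le n$), together with $T_{\tau,i}$ for all $\tau\in\mathcal{F}\cup\{\theta\}\cup\{\alpha_j\mid 1\le j\le n\}$ and all $1\le i\le n$; (iii) the terms $\theta(y_1,\dots,y_n,y_{n+1})$, $\alpha_i(y,0)$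 and $R_i$ ($1\le i\le n$), together with $T_{\tau,i}$ for all $\tau\in\mathcal{F}$ and all $1\le i\le n$; (iv) the terms $R_i$, $\theta(y_1,\dots,y_n,y_{n+1})$ and $\alpha_i(y,0)$ ($1\le i\le n$), together with $S_{\tau,i,j}$ for all $\tau\in\mathcal{F}$ (of arity $k$) and all $i,j$ with $1\le i\le n$, $1\le j\le k$. Moreover, if $\mathbb{V}$ is semi-abelian, then in (i) the terms $\theta(y_1,\dots,y_{n+1}),\alpha_i(y_1,y_2)$, in (ii) the terms $0,\theta(y_1,\dots,y_{n+1}),\alpha_i(y,0)$, in (iii) the terms $\theta(y_1,\dots,y_{n+1}),\alpha_i(y,0)$, and in (iv) the terms $\theta(y_1,\dots,y_{n+1}),\alpha_i(y,0)$ can be replaced by the terms $\tau(y_1,\dots,y_k)$ for all operation symbols $\tau\in\mathcal{F}$ (including the constant $0$), $k$ being the arity of $\tau$, and the resulting sets still determine ideals in $\mathbb{V}$.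
   Context: Let $\mathbb{V}$ be a variety of universal algebras with signature $\mathcal{F}$ (a set of finitary operation symbols; constants are 0-ary). $\mathbb{V}$ is called BIT speciale if its algebraic theory contains a constant $0$ and, for some natural number $n\ge1$, binary terms $\alpha_1,\dots,\alpha_n$ and an $(n+1)$-ary term $\theta$ such that the identities $\alpha_i(x,x)=0$ ($1\le i\le n$) and $\theta(\alpha_1(x,y),\dots,\alpha_n(x,y),y)=x$ hold in $\mathbb{V}$. A semi-abelian variety is (equivalently, by Bourn–Janelidze) a BIT speciale variety in which $0$ is the only constant of its algebraic theory. A term $t(x_1,\dots,x_m,y_1,\dots,y_p)$ over $\mathcal{F}$ is an ideal term in the variables $y_1,\dots,y_p$ if $t(x_1,\dots,x_m,0,\dots,0)=0$ is an identity of $\mathbb{V}$. A non-empty subset $H$ of a $\mathbb{V}$-algebra $A$ is an ideal if for every ideal term $t(x_1,\dots,x_m,y_1,\dots,y_p)$ in the variables $y_1,\dots,y_p$, all $a_1,\dots,a_m\in A$ and all $b_1,\dots,b_p\in H$, one has $t(a_1,\dots,a_m,b_1,\dots,b_p)\in H$. A set $T$ of ideal terms determines ideals in $\mathbb{V}$ if for every $\mathbb{V}$-algebra $A$, a non-empty subset $H\subseteq A$ is an ideal if and only if for every $t\in T$, every assignment of elements of $A$ to its $x$-variables and of elements of $H$ to its $y$-variables yields a value in $H$. *)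

From mathcomp Require Import all_boot.
Set Implicit Arguments. Unset Strict Implicit. Unset Printing Implicit Defensive.

Record signature := Signature { op :> Type; arity : op -> nat }.

Section UA.
Variable S : signature.

Inductive term (X : Type) : Type :=
| Var : X -> term X
| App : forall f : S, ('I_(arity f) -> term X) -> term X.
Arguments Var {X}.
Arguments App {X}.

Record algebra := Algebra {
  carrier :> Type;
  interp : forall f : S, ('I_(arity f) -> carrier) -> carrier }.

Fixpoint eval (A : algebra) (X : Type) (e : X -> A) (t : term X) : A :=
  match t with
  | Var x => e x
  | App f args => @interp A f (fun i => eval e (args i))
  end.

Fixpoint subst (X Y : Type) (s : X -> term Y) (t : term X) : term Y :=
  match t with
  | Var x => s x
  | App f args => App f (fun i => subst s (args i))
  end.

Definition opterm (f : S) : term 'I_(arity f) := App f (fun i => Var i).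

(** A variety is given by a set of identities E (pairs of terms in
    variables nat); its algebras are the models of E. *)
Definition identities := term nat -> term nat -> Prop.

Definition in_variety (E : identities) (A : algebra) : Prop :=
  forall s t, E s t -> forall e : nat -> A, eval e s = eval e t.

Definition holds (E : identities) (X : Type) (s t : term X) : Prop :=
  forall A : algebra, in_variety E A -> forall e : X -> A, eval e s = eval e t.

Definition cst (X : Type) (c : term void) : term X :=
  subst (fun v : void => match v with end) c.

Definition bin (X : Type) (t : term 'I_2) (a b : term X) : term X :=
  subst (fun i : 'I_2 => if val i == 0 then a else b) t.

Definition app_last (n : nat) (X : Type) (th : term 'I_n.+1)
    (ys : 'I_n -> term X) (z : term X) : term X :=
  subst (fun j : 'I_n.+1 => match unlift ord_max j with
                            | Some j' => ys j'
                            | None => z end) th.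

Definition BIT_speciale (E : identities) (n : nat) (zero : term void)
    (alpha : 'I_n -> term 'I_2) (theta : term 'I_n.+1) : Prop :=
  0 < n /\
  (forall i, holds E (bin (alpha i) (Var 0) (Var 0)) (cst nat zero)) /\
  holds E (app_last theta (fun i => bin (alpha i) (Var 0) (Var 1)) (Var 1))
          (Var 0).

(** Semi-abelian: BIT speciale and 0 is the only constant of the theory. *)
Definition semi_abelian (E : identities) (n : nat) (zero : term void)
    (alpha : 'I_n -> term 'I_2) (theta : term 'I_n.+1) : Prop :=
  BIT_speciale E zero alpha theta /\
  forall c : term void, holds E c zero.

(** Terms with variables [inl j] (parameters x_j) and [inr j] (ideal
    variables y_j). *)
Definition iterm := term (nat + nat).
Definition xv (j : nat) : iterm := Var (inl j).
Definition yv (j : nat) : iterm := Var (inr j).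

Definition assign (A : algebra) (ex ey : nat -> A) (v : nat + nat) : A :=
  match v with inl j => ex j | inr j => ey j end.

Definition ideal_term (E : identities) (zero : term void) (t : iterm) : Prop :=
  holds E (subst (fun v => match v with
                           | inl j => Var j
                           | inr _ => cst nat zero end) t)
          (cst nat zero).

Definition closed_under (A : algebra) (H : A -> Prop) (t : iterm) : Prop :=
  forall ex ey : nat -> A, (forall j, H (ey j)) -> H (eval (assign ex ey) t).

Definition ideal (E : identities) (zero : term void) (A : algebra)
    (H : A -> Prop) : Prop :=
  (exists a, H a) /\ forall t, ideal_term E zero t -> closed_under H t.

Definition determines_ideals (E : identities) (zero : term void)
    (T : iterm -> Prop) : Prop :=
  (forall t, T t -> ideal_term E zero t) /\
  forall A : algebra, in_variety E A -> forall H : A -> Prop, (exists a, H a) ->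
    (ideal E zero H <-> forall t, T t -> closed_under H t).

Section Terms.
Variables (n : nat) (zero : term void) (alpha : 'I_n -> term 'I_2)
          (theta : term 'I_n.+1).

(* T_{tau,i}; y_{j l} is encoded as y_(j*n+l). *)
Definition Tt (k : nat) (tau : term 'I_k) (i : 'I_n) : iterm :=
  bin (alpha i)
      (subst (fun j : 'I_k =>
                app_last theta (fun l : 'I_n => yv (val j * n + val l)) (xv j)) tau)
      (subst (fun j : 'I_k => xv j) tau).

Definition St (k : nat) (tau : term 'I_k) (i : 'I_n) (j : 'I_k) : iterm :=
  bin (alpha i)
      (subst (fun m : 'I_k =>
                if m == j then app_last theta (fun l : 'I_n => yv l) (xv m)
                else xv m) tau)
      (subst (fun m : 'I_k => xv m) tau).

Definition Rt (i : 'I_n) : iterm :=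
  bin (alpha i) (app_last theta (fun l : 'I_n => yv l) (xv 0))
                (app_last theta (fun l : 'I_n => yv (n + l)) (xv 0)).

Definition theta_y : iterm := app_last theta (fun l : 'I_n => yv l) (yv n).
Definition alpha_yy (i : 'I_n) : iterm := bin (alpha i) (yv 0) (yv 1).
Definition alpha_y0 (i : 'I_n) : iterm := bin (alpha i) (yv 0) (cst _ zero).
Definition zero_t : iterm := cst _ zero.
Definition op_y (f : S) : iterm := subst (fun j : 'I_(arity f) => yv j) (opterm f).

Definition ops_i (t : iterm) : Prop :=
  (exists (f : S) i, t = Tt (opterm f) i) \/ (exists i, t = Tt theta i).
Definition ops_ii (t : iterm) : Prop :=
  (exists (f : S) i, t = Tt (opterm f) i) \/ (exists i, t = Tt theta i) \/
  (exists i j, t = Tt (alpha j) i).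
Definition ops_iii (t : iterm) : Prop :=
  (exists (f : S) i, t = Tt (opterm f) i) \/ (exists i, t = Rt i).
Definition ops_iv (t : iterm) : Prop :=
  (exists (f : S) i j, t = St (opterm f) i j) \/ (exists i, t = Rt i).

Definition base_i (t : iterm) : Prop :=
  t = theta_y \/ exists i, t = alpha_yy i.
Definition base_ii (t : iterm) : Prop :=
  t = zero_t \/ t = theta_y \/ exists i, t = alpha_y0 i.
Definition base_iii (t : iterm) : Prop :=
  t = theta_y \/ exists i, t = alpha_y0 i.
Definition base_iv (t : iterm) : Prop :=
  t = theta_y \/ exists i, t = alpha_y0 i.
Definition base_sa (t : iterm) : Prop := exists f : S, t = op_y f.

Definition Tset_i : iterm -> Prop := fun t => base_i t \/ ops_i t.
Definition Tset_ii : iterm -> Prop := fun t => base_ii t \/ ops_ii t.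
Definition Tset_iii : iterm -> Prop := fun t => base_iii t \/ ops_iii t.
Definition Tset_iv : iterm -> Prop := fun t => base_iv t \/ ops_iv t.
Definition Tset_i_sa : iterm -> Prop := fun t => base_sa t \/ ops_i t.
Definition Tset_ii_sa : iterm -> Prop := fun t => base_sa t \/ ops_ii t.
Definition Tset_iii_sa : iterm -> Prop := fun t => base_sa t \/ ops_iii t.
Definition Tset_iv_sa : iterm -> Prop := fun t => base_sa t \/ ops_iv t.
End Terms.

End UA.
Arguments Var {S X}.
Arguments App {S X}.

(* Write [a ~ b] ([diffs_in H a b]) when all [alpha_i(a,b)] lie in [H]. If
   [H] contains [0], is closed under [alpha_i(-,0)] and [theta(-,0)], and [~]
   is compatible with the basic operations, then [H] is closed under every
   ideal term [t]: by induction on [t], [t(x,y) ~ t(x,0) = 0] whenever the [y]s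
   lie in [H], and then [t(x,y) = theta(alpha_1(t(x,y),0),...,alpha_n(t(x,y),0),0)]
   lies in [H].  Each listed set forces these four properties.  Closure under
   [T_{tau,i}] is compatibility of [~] with [tau] itself, since
   [theta(alpha(a,b),b) = a].  Closure under [R_i] makes [~] euclidean, hence
   an equivalence, so that compatibility may be checked one argument at a time,
   which is what [S_{tau,i,j}] provides.  In the semi-abelian case closure
   under the basic operations makes [H] a subalgebra, which contains [0]
   because [0] is the only constant. *)
From mathcomp Require Import all_boot.
From Stdlib Require Import FunctionalExtensionality.
Set Implicit Arguments. Unset Strict Implicit. Unset Printing Implicit Defensive.

Definition extend (T : Type) k (h : 'I_k -> T) (d : T) (p : nat) : T :=
  oapp h d (insub p).

Lemma extendE T k (h : 'I_k -> T) d (j : 'I_k) : extend h d j = h j.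
Proof. by rewrite /extend valK. Qed.

Lemma extend_out T k (h : 'I_k -> T) d p : k <= p -> extend h d p = d.
Proof. by move=> le_kp; rewrite /extend insubF // ltnNge le_kp. Qed.

Lemma extend_all T (P : T -> Prop) k (h : 'I_k -> T) d :
  (forall j, P (h j)) -> P d -> forall p, P (extend h d p).
Proof. by move=> Ph Pd p; rewrite /extend; case: insub. Qed.

Section IdealDetermination.
Variable S : signature.

Lemma eq_eval (A : algebra S) X (e1 e2 : X -> A) (t : term S X) :
  e1 =1 e2 -> eval e1 t = eval e2 t.
Proof. by move/functional_extensionality->. Qed.

Lemma interp_extend (A : algebra S) f (u : 'I_(arity f) -> A) d :
  interp (fun j : 'I_(arity f) => extend u d j) = interp u.
Proof. by congr interp; apply: functional_extensionality => j; rewrite extendE. Qed.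

Lemma eval_subst (A : algebra S) X Y (e : Y -> A) (s : X -> term S Y) t :
  eval e (subst s t) = eval (fun x => eval e (s x)) t.
Proof.
elim: t => [x|f args IH] //=.
by congr interp; apply: functional_extensionality.
Qed.

Variables (E : identities S) (n : nat) (zero : term S void)
  (alpha : 'I_n -> term S 'I_2) (theta : term S 'I_n.+1).

Definition zeroA (A : algebra S) : A := eval (fun v : void => match v with end) zero.

Definition alphaA (A : algebra S) (i : 'I_n) (a b : A) : A :=
  eval (fun j : 'I_2 => if val j == 0 then a else b) (alpha i).

Definition thetaA (A : algebra S) (h : 'I_n -> A) (z : A) : A :=
  eval (fun j => if unlift ord_max j is Some l then h l else z) theta.

Lemma eq_thetaA (A : algebra S) (h1 h2 : 'I_n -> A) z :
  h1 =1 h2 -> thetaA h1 z = thetaA h2 z.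
Proof. by move/functional_extensionality->. Qed.

Lemma eval_zero (A : algebra S) X (e : X -> A) : eval e (cst X zero) = zeroA A.
Proof. by rewrite /cst eval_subst; apply: eq_eval. Qed.

Lemma eval_alpha (A : algebra S) X (e : X -> A) i a b :
  eval e (bin (alpha i) a b) = alphaA i (eval e a) (eval e b).
Proof. by rewrite /bin eval_subst; apply: eq_eval => j; case: ifP. Qed.

Lemma eval_theta (A : algebra S) X (e : X -> A) ys z :
  eval e (app_last theta ys z) = thetaA (fun l => eval e (ys l)) (eval e z).
Proof. by rewrite /app_last eval_subst; apply: eq_eval => j; case: unlift. Qed.

Lemma eval_Tt (A : algebra S) k (tau : term S 'I_k) i (ex ey : nat -> A) :
  eval (assign ex ey) (Tt alpha theta tau i) =
  alphaA i (eval (fun j : 'I_k => thetaA (fun l => ey (j * n + l)) (ex j)) tau)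
           (eval (fun j : 'I_k => ex j) tau).
Proof.
rewrite /Tt eval_alpha !eval_subst; congr alphaA.
by apply: eq_eval => j; rewrite eval_theta.
Qed.

Lemma eval_St (A : algebra S) k (tau : term S 'I_k) i j (ex ey : nat -> A) :
  eval (assign ex ey) (St alpha theta tau i j) =
  alphaA i (eval (fun m : 'I_k =>
                    if m == j then thetaA (fun l => ey l) (ex m) else ex m) tau)
           (eval (fun m : 'I_k => ex m) tau).
Proof.
rewrite /St eval_alpha !eval_subst; congr alphaA.
by apply: eq_eval => m; case: eqP; rewrite ?eval_theta.
Qed.

Lemma eval_Rt (A : algebra S) i (ex ey : nat -> A) :
  eval (assign ex ey) (Rt alpha theta i) =
  alphaA i (thetaA (fun l => ey l) (ex 0)) (thetaA (fun l => ey (n + l)) (ex 0)).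
Proof. by rewrite /Rt eval_alpha !eval_theta. Qed.

Lemma eval_theta_y (A : algebra S) (ex ey : nat -> A) :
  eval (assign ex ey) (theta_y theta) = thetaA (fun l => ey l) (ey n).
Proof. by rewrite /theta_y eval_theta. Qed.

Lemma ideal_termE t : ideal_term E zero t <->
  forall A : algebra S, in_variety E A -> forall ex : nat -> A,
    eval (assign ex (fun=> zeroA A)) t = zeroA A.
Proof.
have eval_y0 (A : algebra S) (ex : nat -> A) :
    eval ex (subst (fun v => if v is inl j then Var j else cst nat zero) t)
  = eval (assign ex (fun=> zeroA A)) t.
  by rewrite eval_subst; apply: eq_eval => -[j|j] //=; rewrite eval_zero.
split=> Ht A HA ex; last by rewrite eval_y0 eval_zero; exact: Ht.
by have := Ht A HA ex; rewrite eval_y0 eval_zero.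
Qed.

Hypothesis HB : BIT_speciale E zero alpha theta.

Let n_gt0 : 0 < n := proj1 HB.

Section Laws.
Variable A : algebra S.
Hypothesis HA : in_variety E A.

Lemma alphaA_xx i (a : A) : alphaA i a a = zeroA A.
Proof.
have := (proj1 (proj2 HB)) i A HA (fun=> a).
by rewrite eval_alpha eval_zero.
Qed.

Lemma thetaA_alpha (a b : A) : thetaA (fun i => alphaA i a b) b = a.
Proof.
have := (proj2 (proj2 HB)) A HA (fun k => if k == 0 then a else b).
by rewrite eval_theta; under eq_thetaA do rewrite eval_alpha.
Qed.

Lemma thetaA_zero (z : A) : thetaA (fun=> zeroA A) z = z.
Proof.
by rewrite -[RHS](thetaA_alpha z z); apply: eq_thetaA => i; rewrite alphaA_xx.
Qed.

End Laws.

Lemma ideal_term_Tt k (tau : term S 'I_k) i : ideal_term E zero (Tt alpha theta tau i).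
Proof.
apply/ideal_termE => A HA ex; rewrite eval_Tt.
by under eq_eval do rewrite thetaA_zero //; rewrite alphaA_xx.
Qed.

Lemma ideal_term_St k (tau : term S 'I_k) i j :
  ideal_term E zero (St alpha theta tau i j).
Proof.
apply/ideal_termE => A HA ex; rewrite eval_St.
by under eq_eval do rewrite thetaA_zero // if_same; rewrite alphaA_xx.
Qed.

Lemma ideal_term_Rt i : ideal_term E zero (Rt alpha theta i).
Proof. by apply/ideal_termE => A HA ex; rewrite eval_Rt !thetaA_zero // alphaA_xx. Qed.

Lemma ideal_term_theta_y : ideal_term E zero (theta_y theta).
Proof. by apply/ideal_termE => A HA ex; rewrite eval_theta_y thetaA_zero. Qed.

Lemma ideal_term_alpha_yy i : ideal_term E zero (alpha_yy alpha i).
Proof. by apply/ideal_termE => A HA ex; rewrite eval_alpha alphaA_xx. Qed.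

Lemma ideal_term_alpha_y0 i : ideal_term E zero (alpha_y0 zero alpha i).
Proof. by apply/ideal_termE => A HA ex; rewrite eval_alpha eval_zero alphaA_xx. Qed.

Lemma ideal_term_zero_t : ideal_term E zero (zero_t zero).
Proof. by apply/ideal_termE => A HA ex; rewrite eval_zero. Qed.

Section Criterion.
Variables (A : algebra S) (H : A -> Prop).

Definition diffs_in (a b : A) : Prop := forall i, H (alphaA i a b).

Definition alpha_zero_closed : Prop :=
  forall i b, H b -> H (alphaA i b (zeroA A)).

Definition theta_zero_closed : Prop :=
  forall h, (forall l, H (h l)) -> H (thetaA h (zeroA A)).

Definition diffs_compatible : Prop :=
  forall f (u v : 'I_(arity f) -> A),
    (forall j, diffs_in (u j) (v j)) -> diffs_in (interp u) (interp v).

Hypotheses (HA : in_variety E A) (H0 : H (zeroA A)).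
Hypotheses (Halpha : alpha_zero_closed) (Htheta : theta_zero_closed).
Hypothesis Hcomp : diffs_compatible.

Lemma diffs_in_eval ex ey (t : iterm S) : (forall j, H (ey j)) ->
  diffs_in (eval (assign ex ey) t) (eval (assign ex (fun=> zeroA A)) t).
Proof.
move=> Hey; elim: t => [[j|j]|f args IH] /=.
- by move=> i; rewrite alphaA_xx.
- by move=> i; apply: Halpha.
- exact: Hcomp.
Qed.

Lemma closed_under_ideal_term t : ideal_term E zero t -> closed_under H t.
Proof.
move=> /ideal_termE Ht ex ey Hey.
rewrite -(thetaA_alpha HA (eval (assign ex ey) t) (zeroA A)).
by apply: Htheta => i; rewrite -(Ht A HA ex); apply: diffs_in_eval.
Qed.

End Criterion.

Lemma determines_ideals_union (B O : iterm S -> Prop) :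
  (forall t, B t -> ideal_term E zero t) ->
  (forall t, O t -> ideal_term E zero t) ->
  (forall A : algebra S, in_variety E A -> forall H : A -> Prop, (exists a, H a) ->
     (forall t, B t -> closed_under H t) -> (forall t, O t -> closed_under H t) ->
     [/\ H (zeroA A), alpha_zero_closed H, theta_zero_closed H & diffs_compatible H]) ->
  determines_ideals E zero (fun t => B t \/ O t).
Proof.
move=> idB idO Hprops; split=> [t [/idB|/idO] //|A HA H Hne]; split.
- by case=> _ Hid t [/idB|/idO] /Hid.
- move=> Hcl; split=> //.
  have [H0 Ha Ht Hc] := Hprops A HA H Hne (fun t Bt => Hcl t (or_introl Bt))
                                         (fun t Ot => Hcl t (or_intror Ot)).
  by move=> t; apply: closed_under_ideal_term.
Qed.

Section ClosureProperties.
Variables (A : algebra S) (H : A -> Prop).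
Hypothesis HA : in_variety E A.

Lemma zero_in_of_alpha_yy : (exists a, H a) ->
  (forall i, closed_under H (alpha_yy alpha i)) -> H (zeroA A).
Proof.
move=> [a Ha] Hc; have := Hc (Ordinal n_gt0) (fun=> zeroA A) (fun=> a) (fun=> Ha).
by rewrite eval_alpha alphaA_xx.
Qed.

Lemma alpha_zero_closed_of_alpha_yy : H (zeroA A) ->
  (forall i, closed_under H (alpha_yy alpha i)) -> alpha_zero_closed H.
Proof.
move=> H0 Hc i b Hb.
have := Hc i (fun=> zeroA A) (fun p => if p == 0 then b else zeroA A).
by rewrite eval_alpha; apply=> p; case: ifP.
Qed.

Lemma alpha_zero_closed_of_alpha_y0 :
  (forall i, closed_under H (alpha_y0 zero alpha i)) -> alpha_zero_closed H.
Proof.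
move=> Hc i b Hb; have := Hc i (fun=> zeroA A) (fun=> b) (fun=> Hb).
by rewrite eval_alpha eval_zero.
Qed.

Lemma zero_in_of_zero_t :
  (exists a, H a) -> closed_under H (zero_t zero) -> H (zeroA A).
Proof.
move=> [a Ha] Hc; have := Hc (fun=> zeroA A) (fun=> a) (fun=> Ha).
by rewrite eval_zero.
Qed.

Lemma theta_zero_closed_of_theta_y : H (zeroA A) ->
  closed_under H (theta_y theta) -> theta_zero_closed H.
Proof.
move=> H0 Hc h Hh; have := Hc (fun=> zeroA A) _ (extend_all Hh H0).
by rewrite eval_theta_y extend_out //; under eq_thetaA do rewrite extendE.
Qed.

Lemma diffs_compatible_of_Tt : H (zeroA A) ->
  (forall f i, closed_under H (Tt alpha theta (opterm f) i)) -> diffs_compatible H.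
Proof.
move=> H0 Hc f u v Huv i.
pose ey p := extend (fun j =>
  extend (fun l => alphaA l (u j) (v j)) (zeroA A) (p %% n)) (zeroA A) (p %/ n).
have ey_in p : H (ey p).
  by apply: extend_all => // j; apply: extend_all => // l; apply: Huv.
have eyE (j : 'I_(arity f)) (l : 'I_n) : ey (j * n + l) = alphaA l (u j) (v j).
  rewrite /ey divnMDl // modnMDl divn_small // modn_small //.
  by rewrite addn0 !extendE.
have := Hc f i (extend v (zeroA A)) ey ey_in; rewrite eval_Tt /=.
have -> : (fun j : 'I_(arity f) =>
            thetaA (fun l => ey (j * n + l)) (extend v (zeroA A) j)) = u.
  apply: functional_extensionality => j.
  by rewrite extendE (eq_thetaA _ (eyE j)) thetaA_alpha.
by rewrite interp_extend.
Qed.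

Lemma zero_in_of_Rt : (exists a, H a) ->
  (forall i, closed_under H (Rt alpha theta i)) -> H (zeroA A).
Proof.
move=> [a Ha] Hc; have := Hc (Ordinal n_gt0) (fun=> a) (fun=> a) (fun=> Ha).
by rewrite eval_Rt alphaA_xx.
Qed.

Section EuclideanDiffs.
Hypothesis H0 : H (zeroA A).
Hypothesis HR : forall i, closed_under H (Rt alpha theta i).

Lemma diffs_in_theta (h1 h2 : 'I_n -> A) x :
  (forall l, H (h1 l)) -> (forall l, H (h2 l)) ->
  diffs_in H (thetaA h1 x) (thetaA h2 x).
Proof.
move=> Hh1 Hh2 i.
pose ey p := if p < n then extend h1 (zeroA A) p else extend h2 (zeroA A) (p - n).
have ey_in p : H (ey p) by rewrite /ey; case: ifP => _; apply: extend_all.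
have ey1 (l : 'I_n) : ey l = h1 l by rewrite /ey ltn_ord extendE.
have ey2 (l : 'I_n) : ey (n + l) = h2 l.
  by rewrite /ey ltnNge leq_addr addKn extendE.
have := @HR i (fun=> x) ey ey_in.
by rewrite eval_Rt (eq_thetaA _ ey1) (eq_thetaA _ ey2).
Qed.

Lemma diffs_in_refl a : diffs_in H a a.
Proof. by move=> i; rewrite alphaA_xx. Qed.

(* [a] and [c] are both of the form [theta(_, b)] since [a = theta(alpha(a,b), b)]. *)
Lemma diffs_in_euclidean a b c : diffs_in H a b -> diffs_in H c b -> diffs_in H a c.
Proof.
move=> Hab Hcb; rewrite -(thetaA_alpha HA a b) -(thetaA_alpha HA c b).
exact: diffs_in_theta.
Qed.

Lemma diffs_in_sym a b : diffs_in H a b -> diffs_in H b a.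
Proof. by move/(diffs_in_euclidean (diffs_in_refl b)). Qed.

Lemma diffs_in_trans a b c : diffs_in H a b -> diffs_in H b c -> diffs_in H a c.
Proof. by move=> Hab /diffs_in_sym; apply: diffs_in_euclidean. Qed.

Hypothesis HS : forall f i j, closed_under H (St alpha theta (opterm f) i j).

Lemma diffs_in_interp_at f (w : 'I_(arity f) -> A) j a : diffs_in H a (w j) ->
  diffs_in H (interp (fun m => if m == j then a else w m)) (interp w).
Proof.
move=> Ha i.
pose ey := extend (fun l => alphaA l a (w j)) (zeroA A).
have := @HS f i j (extend w (zeroA A)) ey (extend_all Ha H0); rewrite eval_St /=.
have -> : (fun m : 'I_(arity f) => if m == j
            then thetaA (fun l => ey l) (extend w (zeroA A) m)
            else extend w (zeroA A) m) = (fun m => if m == j then a else w m).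
  apply: functional_extensionality => m; rewrite extendE.
  case: eqP => [->|//]; rewrite (eq_thetaA _ (extendE _ _)).
  exact: thetaA_alpha.
by rewrite interp_extend.
Qed.

Lemma diffs_compatible_of_St : diffs_compatible H.
Proof.
move=> f u v Huv.
pose mix m (p : 'I_(arity f)) := if p < m then u p else v p.
have mixS m (lt_mk : m < arity f) :
    mix m.+1 = fun p => if p == Ordinal lt_mk then u (Ordinal lt_mk) else mix m p.
  apply: functional_extensionality => p; rewrite /mix.
  case: (eqVneq p (Ordinal lt_mk)) => [->|]; first by rewrite /= ltnSn.
  by rewrite -val_eqE ltnS leq_eqVlt /= => /negbTE ->.
have diffs_mix m : m <= arity f -> diffs_in H (interp (mix m)) (interp v).
  elim: m => [_|m IH lt_mk].
    have -> : mix 0 = v by apply: functional_extensionality => p; rewrite /mix ltn0.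
    exact: diffs_in_refl.
  rewrite (mixS m lt_mk); apply: diffs_in_trans (IH (ltnW lt_mk)).
  by apply: diffs_in_interp_at; rewrite /mix ltnn; apply: Huv.
have -> : u = mix (arity f).
  by apply: functional_extensionality => p; rewrite /mix ltn_ord.
exact: diffs_mix.
Qed.

End EuclideanDiffs.

Lemma eval_closed_of_base_sa : (exists a, H a) ->
  (forall t, base_sa t -> closed_under H t) ->
  forall X (t : term S X) (e : X -> A), (forall x, H (e x)) -> H (eval e t).
Proof.
move=> [a Ha] Hc X t e He; elim: t => [x|f args IH] /=; first exact: He.
have := @Hc _ (ex_intro _ f erefl) (fun=> a) _ (extend_all IH Ha).
by rewrite /= interp_extend.
Qed.

Lemma props_of_base_sa : (exists a, H a) -> (forall t, base_sa t -> closed_under H t) ->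
  [/\ H (zeroA A), alpha_zero_closed H & theta_zero_closed H].
Proof.
move=> Hne /(eval_closed_of_base_sa Hne) Heval.
have H0 : H (zeroA A) by apply: Heval; case.
by split=> // [i b Hb|h Hh]; apply: Heval => j; [case: ifP | case: unlift].
Qed.

Lemma props_of_base_i : (exists a, H a) ->
  (forall t, base_i alpha theta t -> closed_under H t) ->
  [/\ H (zeroA A), alpha_zero_closed H & theta_zero_closed H].
Proof.
move=> Hne Hc; have Hyy i : closed_under H (alpha_yy alpha i).
  by apply: Hc; right; exists i.
have H0 := zero_in_of_alpha_yy Hne Hyy.
split=> //; first exact: alpha_zero_closed_of_alpha_yy.
by apply: theta_zero_closed_of_theta_y => //; apply: Hc; left.
Qed.

Lemma props_of_base_ii : (exists a, H a) ->
  (forall t, base_ii zero alpha theta t -> closed_under H t) ->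
  [/\ H (zeroA A), alpha_zero_closed H & theta_zero_closed H].
Proof.
move=> Hne Hc; have H0 : H (zeroA A).
  by apply: zero_in_of_zero_t => //; apply: Hc; left.
split=> //.
  by apply: alpha_zero_closed_of_alpha_y0 => i; apply: Hc; do 2 right; exists i.
by apply: theta_zero_closed_of_theta_y => //; apply: Hc; right; left.
Qed.

Lemma props_of_base_iii : H (zeroA A) ->
  (forall t, base_iii zero alpha theta t -> closed_under H t) ->
  alpha_zero_closed H /\ theta_zero_closed H.
Proof.
move=> H0 Hc; split.
  by apply: alpha_zero_closed_of_alpha_y0 => i; apply: Hc; right; exists i.
by apply: theta_zero_closed_of_theta_y => //; apply: Hc; left.
Qed.

Lemma props_of_ops_iii : (exists a, H a) ->
  (forall t, ops_iii alpha theta t -> closed_under H t) ->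
  H (zeroA A) /\ diffs_compatible H.
Proof.
move=> Hne Hc; have H0 : H (zeroA A).
  by apply: zero_in_of_Rt => // i; apply: Hc; right; exists i.
by split=> //; apply: diffs_compatible_of_Tt => // f i; apply: Hc; left; exists f, i.
Qed.

Lemma props_of_ops_iv : (exists a, H a) ->
  (forall t, ops_iv alpha theta t -> closed_under H t) ->
  H (zeroA A) /\ diffs_compatible H.
Proof.
move=> Hne Hc; have HR i : closed_under H (Rt alpha theta i).
  by apply: Hc; right; exists i.
have H0 := zero_in_of_Rt Hne HR.
split=> //; apply: diffs_compatible_of_St => // f i j.
by apply: Hc; left; exists f, i, j.
Qed.

End ClosureProperties.

Lemma ideal_terms_base_i t : base_i alpha theta t -> ideal_term E zero t.
Proof.
by case=> [->|[i ->]]; [exact: ideal_term_theta_y | exact: ideal_term_alpha_yy].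
Qed.

Lemma ideal_terms_base_ii t : base_ii zero alpha theta t -> ideal_term E zero t.
Proof.
case=> [->|[->|[i ->]]];
  [exact: ideal_term_zero_t | exact: ideal_term_theta_y | exact: ideal_term_alpha_y0].
Qed.

Lemma ideal_terms_base_iii t : base_iii zero alpha theta t -> ideal_term E zero t.
Proof.
by case=> [->|[i ->]]; [exact: ideal_term_theta_y | exact: ideal_term_alpha_y0].
Qed.

Lemma ideal_terms_ops_i t : ops_i alpha theta t -> ideal_term E zero t.
Proof. by case=> [[f [i ->]]|[i ->]]; exact: ideal_term_Tt. Qed.

Lemma ideal_terms_ops_ii t : ops_ii alpha theta t -> ideal_term E zero t.
Proof. by case=> [[f [i ->]]|[[i ->]|[i [j ->]]]]; exact: ideal_term_Tt. Qed.

Lemma ideal_terms_ops_iii t : ops_iii alpha theta t -> ideal_term E zero t.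
Proof.
by case=> [[f [i ->]]|[i ->]]; [exact: ideal_term_Tt | exact: ideal_term_Rt].
Qed.

Lemma ideal_terms_ops_iv t : ops_iv alpha theta t -> ideal_term E zero t.
Proof.
by case=> [[f [i [j ->]]]|[i ->]]; [exact: ideal_term_St | exact: ideal_term_Rt].
Qed.

Lemma determines_ideals_i : determines_ideals E zero (Tset_i alpha theta).
Proof.
apply: determines_ideals_union ideal_terms_base_i ideal_terms_ops_i _.
move=> A HA H Hne Hbase Hops; have [H0 Ha Ht] := props_of_base_i HA Hne Hbase.
split=> //; apply: diffs_compatible_of_Tt => // f i.
by apply: Hops; left; exists f, i.
Qed.

Lemma determines_ideals_ii : determines_ideals E zero (Tset_ii zero alpha theta).
Proof.
apply: determines_ideals_union ideal_terms_base_ii ideal_terms_ops_ii _.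
move=> A HA H Hne Hbase Hops; have [H0 Ha Ht] := props_of_base_ii Hne Hbase.
split=> //; apply: diffs_compatible_of_Tt => // f i.
by apply: Hops; left; exists f, i.
Qed.

Lemma determines_ideals_iii : determines_ideals E zero (Tset_iii zero alpha theta).
Proof.
apply: determines_ideals_union ideal_terms_base_iii ideal_terms_ops_iii _.
move=> A HA H Hne Hbase Hops; have [H0 Hc] := props_of_ops_iii HA Hne Hops.
by have [Ha Ht] := props_of_base_iii H0 Hbase.
Qed.

Lemma determines_ideals_iv : determines_ideals E zero (Tset_iv zero alpha theta).
Proof.
(* [base_iv] and [base_iii] are the same set of terms. *)
apply: determines_ideals_union ideal_terms_base_iii ideal_terms_ops_iv _.
move=> A HA H Hne Hbase Hops; have [H0 Hc] := props_of_ops_iv HA Hne Hops.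
by have [Ha Ht] := props_of_base_iii H0 Hbase.
Qed.

Section SemiAbelian.
Hypothesis zero_only_constant : forall c : term S void, holds E c zero.

Lemma ideal_terms_base_sa t : base_sa t -> ideal_term E zero t.
Proof.
case=> f ->; apply/ideal_termE => A HA ex.
exact: (zero_only_constant (App f (fun=> zero)) HA (fun v : void => match v with end)).
Qed.

Lemma determines_ideals_i_sa : determines_ideals E zero (Tset_i_sa alpha theta).
Proof.
apply: determines_ideals_union ideal_terms_base_sa ideal_terms_ops_i _.
move=> A HA H Hne Hbase Hops; have [H0 Ha Ht] := props_of_base_sa Hne Hbase.
split=> //; apply: diffs_compatible_of_Tt => // f i.
by apply: Hops; left; exists f, i.
Qed.

Lemma determines_ideals_ii_sa : determines_ideals E zero (Tset_ii_sa alpha theta).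
Proof.
apply: determines_ideals_union ideal_terms_base_sa ideal_terms_ops_ii _.
move=> A HA H Hne Hbase Hops; have [H0 Ha Ht] := props_of_base_sa Hne Hbase.
split=> //; apply: diffs_compatible_of_Tt => // f i.
by apply: Hops; left; exists f, i.
Qed.

Lemma determines_ideals_iii_sa : determines_ideals E zero (Tset_iii_sa alpha theta).
Proof.
apply: determines_ideals_union ideal_terms_base_sa ideal_terms_ops_iii _.
move=> A HA H Hne Hbase Hops; have [H0 Ha Ht] := props_of_base_sa Hne Hbase.
by have [_ Hc] := props_of_ops_iii HA Hne Hops.
Qed.

Lemma determines_ideals_iv_sa : determines_ideals E zero (Tset_iv_sa alpha theta).
Proof.
apply: determines_ideals_union ideal_terms_base_sa ideal_terms_ops_iv _.
move=> A HA H Hne Hbase Hops; have [H0 Ha Ht] := props_of_base_sa Hne Hbase.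
by have [_ Hc] := props_of_ops_iv HA Hne Hops.
Qed.

End SemiAbelian.

End IdealDetermination.

Theorem theorem2p6 (S : signature) (E : identities S) (n : nat)
    (zero : term S void) (alpha : 'I_n -> term S 'I_2) (theta : term S 'I_n.+1) :
  BIT_speciale E zero alpha theta ->
  (determines_ideals E zero (Tset_i alpha theta) /\
   determines_ideals E zero (Tset_ii zero alpha theta) /\
   determines_ideals E zero (Tset_iii zero alpha theta) /\
   determines_ideals E zero (Tset_iv zero alpha theta)) /\
  (semi_abelian E zero alpha theta ->
   determines_ideals E zero (Tset_i_sa alpha theta) /\
   determines_ideals E zero (Tset_ii_sa alpha theta) /\
   determines_ideals E zero (Tset_iii_sa alpha theta) /\
   determines_ideals E zero (Tset_iv_sa alpha theta)).
Proof.
move=> HB; split.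
  split; first exact: determines_ideals_i.
  split; first exact: determines_ideals_ii.
  by split; [exact: determines_ideals_iii | exact: determines_ideals_iv].
move=> [_ Hconst]; split; first exact: determines_ideals_i_sa.
split; first exact: determines_ideals_ii_sa.
by split; [exact: determines_ideals_iii_sa | exact: determines_ideals_iv_sa].
Qed.
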